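(* Let $H$ be a digraph (possibly with loops) and let $D$ be an $H$-colored quasi-transitive digraph. If $k \geq 4$, then $D$ has a $(k,H)$-kernel.
   Context: All digraphs are finite. A digraph $D$ is quasi-transitive if for all distinct $u,v\in V(D)$, whenever there is a directed $uv$-path of length $2$, $u$ and $v$ are joined by an arc (in some direction). $D$ has no loops and comes with a map $\rho: A(D)\to V(H)$. For a walk $W=(x_0,\ldots,x_n)$ in $D$, there is an obstruction on $x_i$ if $(\rho(x_{i-1},x_i),\rho(x_i,x_{i+1})) \notin A(H)$; for an open walk this is considered at internal vertices $x_i$, $1\le i\le n-1$, for a closed walk at all $i\in\{0,\ldots,n-1\}$ with indices modulo $n$. $O_H(W)$ is the set of indices with an obstruction; the $H$-length is $l_H(W)=|O_H(W)|+1$ for open $W$ and $|O_H(W)|$ for closed $W$. A $(k,H)$-kernel ($k\ge2$) is a set $S\subseteq V(D)$ such that for every two distinct $u,v\in S$ every directed $uv$-path in $D$ has $H$-length at least $k$, and for every $x\in V(D)\setminus S$ there is a directed path from $x$ to a vertex of $S$ of $H$-length at most $k-1$. *)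

From mathcomp Require Import all_boot.
Set Implicit Arguments. Unset Strict Implicit. Unset Printing Implicit Defensive.

(* H = (VH, AH) : a digraph possibly with loops.
   D = (V, A) : a finite digraph; rho : V -> V -> VH gives the colour of arc (u,v)
   (values on non-arcs are irrelevant). *)

Section HColored.
Variables (VH : finType) (AH : rel VH) (V : finType) (A : rel V) (rho : V -> V -> VH).

Definition quasi_transitive : Prop :=
  forall u w v : V, u != v -> A u w -> A w v -> A u v || A v u.

Definition dipath (x : V) (p : seq V) : bool := path A x p && uniq (x :: p).

Fixpoint obstructions (s : seq V) : nat :=
  match s with
  | x :: ((y :: z :: _) as t) => (~~ AH (rho x y) (rho y z)) + obstructions t
  | _ => 0
  end.

Definition hlength (s : seq V) : nat := (obstructions s).+1.

Definition kH_kernel (k : nat) (S : {set V}) : Prop :=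
  (forall u v : V, u \in S -> v \in S -> u != v ->
     forall p : seq V, dipath u p -> last u p = v -> k <= hlength (u :: p)) /\
  (forall x : V, x \notin S ->
     exists p : seq V, [/\ dipath x p, last x p \in S & hlength (x :: p) <= k.-1]).

End HColored.

From mathcomp Require Import all_boot.
Set Implicit Arguments. Unset Strict Implicit. Unset Printing Implicit Defensive.

(* Every vertex of a finite digraph reaches a terminal strong component. Put
   into S, for each terminal component, one vertex v of maximum in-degree
   inside that component. Distinct vertices of S lie in distinct terminal
   components, so no path joins them and independence is vacuous.
   Quasi-transitivity makes S absorbing within three arcs: a vertex outside
   the component of v that reaches v does so in at most two arcs, and a vertex
   x of the component whose shortest path to v had four arcs would, by
   repeated quasi-transitivity, be an out-neighbour of v dominating every
   in-neighbour of v, hence of larger in-degree. A path with at most three arcs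
   has at most two obstructions, so its H-length is at most 3 <= k - 1. *)

Lemma obstructions_le (VH : finType) (AH : rel VH) (V : finType)
    (rho : V -> V -> VH) (s : seq V) :
  obstructions AH rho s <= (size s).-2.
Proof.
elim: s => [|x [|y [|z t]] IH] //=.
by rewrite -add1n leq_add // leq_b1.
Qed.

Lemma hlength_le_size (VH : finType) (AH : rel VH) (V : finType)
    (rho : V -> V -> VH) (x : V) (p : seq V) :
  0 < size p -> hlength AH rho (x :: p) <= size p.
Proof. by case: p => // y p _; rewrite /hlength ltnS obstructions_le. Qed.

Lemma injective_refinement (T : finType) (f : T -> nat) :
  exists2 g : T -> nat, injective g & forall u v, g u <= g v -> f u <= f v.
Proof.
pose g w := f w * #|T| + enum_rank w.
have gK w : g w %/ #|T| = f w.
  have T_gt0 : 0 < #|T| by apply: leq_ltn_trans (ltn_ord (enum_rank w)).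
  by rewrite divnMDl // divn_small ?addn0.
have gM w : g w %% #|T| = enum_rank w by rewrite modnMDl modn_small.
exists g => [u v guv | u v le_guv]; last by rewrite -gK -(gK v) leq_div2r.
by apply/enum_rank_inj/ord_inj; rewrite -gM guv gM.
Qed.

Section QuasiTransitive.

Variables (V : finType) (A : rel V).
Hypotheses (irrA : irreflexive A) (qtA : quasi_transitive A).

Definition terminal (v : V) : bool := [forall y, connect A v y ==> connect A y v].

Definition reach_within (n : nat) (x v : V) : Prop :=
  exists q : seq V, [/\ path A x q, last x q = v & size q <= n].

Lemma terminalP v y : terminal v -> connect A v y -> connect A y v.
Proof. by move/forallP/(_ y)/implyP. Qed.

Lemma terminal_connect x v : terminal x -> connect A x v -> terminal v.
Proof.
move=> tx xv; apply/forallP => y; apply/implyP => vy.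
exact: connect_trans (terminalP tx (connect_trans xv vy)) xv.
Qed.

Lemma exists_terminal_reachable x : exists2 y, terminal y & connect A x y.
Proof.
have [y xy ymin] := arg_minnP (fun y => #|[set z | connect A y z]|) (connect0 A x).
exists y => //; apply/forallP => z; apply/implyP => yz; apply/negPn/negP => nzy.
suff : #|[set w | connect A z w]| < #|[set w | connect A y w]|.
  by rewrite ltnNge ymin // (connect_trans xy yz).
apply: proper_card; apply/properP; split.
- by apply/subsetP => w; rewrite !inE; apply: connect_trans yz.
- by exists y; rewrite !inE ?connect0.
Qed.

Lemma reach_within_dipath n x v : reach_within n x v -> x != v ->
  exists p, [/\ dipath A x p, last x p = v, 0 < size p & size p <= n].
Proof.
move=> [q [Pq <- le_qn]]; case: (shortenP Pq) => p Pp Up sub_pq xp.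
exists p; split=> //; first by rewrite /dipath Pp Up.
- by case: p xp {Pp Up sub_pq} => //=; rewrite eqxx.
- by apply: leq_trans le_qn; apply: uniq_leq_size sub_pq; case/andP: Up.
Qed.

Lemma qt_arc_path_last v x y p : ~~ connect A v x -> A x y -> path A y p ->
  connect A v y -> A x (last y p).
Proof.
move=> nvx; elim: p y => [|w p IH] y //= Axy /andP[Ayw Pp] vy.
have vw : connect A v w by apply: connect_trans vy (connect1 Ayw).
have xw : x != w by apply: contraNneq nvx => ->.
apply: IH => //; case/orP: (qtA xw Axy Ayw) => // Awx.
by rewrite (connect_trans vw (connect1 Awx)) in nvx.
Qed.

Lemma qt_reach_outside v p x : path A x p -> last x p = v -> ~~ connect A v x ->
  A x v \/ exists2 a, A x a & A a v.
Proof.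
elim: p x => [|y p IH] x /=; first by move=> _ ->; rewrite connect0.
case/andP=> Axy Pp Lp nvx.
have [vy | nvy] := boolP (connect A v y).
  by left; rewrite -Lp (qt_arc_path_last nvx Axy Pp vy).
right; exists y => //.
have [// | [a Aya Aav]] := IH y Pp Lp nvy.
have yv : y != v by apply: contraNneq nvy => ->.
by case/orP: (qtA yv Aya Aav) => // Avy; rewrite (connect1 Avy) in nvy.
Qed.

(* Inside a terminal component this is the ordinary in-degree of the
   subdigraph induced by the component. *)
Definition indeg (w : V) : nat := #|[set z | A z w & connect A w z]|.

Lemma indeg_lt v x : terminal v -> connect A v x -> A v x ->
  (forall w, A w v -> connect A v w -> A w x) -> indeg v < indeg x.
Proof.
move=> tv vx Avx inx; apply: proper_card; apply/properP; split.
- apply/subsetP => w; rewrite !inE => /andP[Awv vw].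
  by rewrite inx //= (connect_trans (terminalP tv vx) vw).
- by exists v; rewrite !inE ?irrA ?Avx ?(terminalP tv vx).
Qed.

Section MaximumInDegree.

Variable v : V.
Hypotheses (tv : terminal v) (vmax : forall x, connect A v x -> indeg x <= indeg v).

Lemma reach3_shortcut x y a b : connect A v x ->
  A x y -> A y a -> A a b -> A b v -> reach_within 3 x v.
Proof.
move=> vx Axy Aya Aab Abv.
have [exa | xa] := eqVneq x a; first by exists [:: b; v]; rewrite /= exa Aab Abv.
case/orP: (qtA xa Axy Aya) => [Axa | Aax].
  by exists [:: a; b; v]; rewrite /= Axa Aab Abv.
have [<- | av] := eqVneq a v; first by exists [:: y; a]; rewrite /= Axy Aya.
case/orP: (qtA av Aab Abv) => [Aav | Ava].
  by exists [:: y; a; v]; rewrite /= Axy Aya Aav.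
have [<- | vx'] := eqVneq v x; first by exists [::].
case/orP: (qtA vx' Ava Aax) => [Avx | Axv]; last first.
  by exists [:: v]; rewrite /= Axv.
have [inx | ] := boolP [forall w, A w v && connect A v w ==> A w x].
  suff : indeg v < indeg x by rewrite ltnNge vmax.
  by apply: indeg_lt => // w Awv vw; move/forallP/(_ w): inx; rewrite Awv vw.
rewrite negb_forall => /existsP[w]; rewrite negb_imply => /andP[/andP[Awv _] nAwx].
have [<- | wx] := eqVneq w x; first by exists [:: v]; rewrite /= Awv.
case/orP: (qtA wx Awv Avx) => [Awx | Axw].
  by rewrite Awx in nAwx.
by exists [:: w; v]; rewrite /= Axw Awv.
Qed.

Lemma reach3_cons x y : connect A v x -> A x y ->
  reach_within 3 y v -> reach_within 3 x v.
Proof.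
move=> vx Axy [q [Pq Lq le_q3]].
have [lt_q3 | ] := ltnP (size q) 3; first by exists (y :: q); rewrite /= Axy Pq Lq.
case: q Pq Lq le_q3 => [|a [|b [|c [|d q]]]] //= /and4P[Aya Aab Abc _] ecv _ _.
by apply: reach3_shortcut vx Axy Aya Aab _; rewrite -ecv.
Qed.

Lemma reach3_to_max x : connect A v x -> reach_within 3 x v.
Proof.
move=> vx; have [p] := connectP (terminalP tv vx).
elim: p x vx => [|y p IH] x vx /= => [_ -> | /andP[Axy Pp] Lp]; first by exists [::].
have vy : connect A v y by apply: connect_trans vx (connect1 Axy).
exact: reach3_cons vx Axy (IH y vy Pp Lp).
Qed.

End MaximumInDegree.

Lemma qt_absorbing_set : exists S : {set V},
  (forall u w, u \in S -> w \in S -> connect A u w -> u = w) /\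
  (forall x, exists2 v, v \in S & reach_within 3 x v).
Proof.
have [key key_inj key_indeg] := injective_refinement indeg.
pose S := [set v | terminal v & [forall w, connect A v w ==> (key w <= key v)]].
have tS v : v \in S -> terminal v by rewrite inE => /andP[].
have keyS v w : v \in S -> connect A v w -> key w <= key v.
  by rewrite inE => /andP[_ /forallP/(_ w)/implyP].
exists S; split=> [u w uS wS uw | x].
  apply: key_inj; apply/eqP.
  by rewrite eqn_leq (keyS _ _ wS (terminalP (tS u uS) uw)) keyS.
have [y ty xy] := exists_terminal_reachable x.
have [v yv vmax] := arg_maxnP key (connect0 A y).
have tv := terminal_connect ty yv.
have vS : v \in S.
  rewrite inE tv; apply/forallP => w; apply/implyP => vw.
  exact: vmax (connect_trans yv vw).
exists v => //.
have [vx | nvx] := boolP (connect A v x).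
  by apply: reach3_to_max => // w vw; apply/key_indeg/keyS.
have [p Pp Lp] := connectP (connect_trans xy yv).
case: (qt_reach_outside Pp (esym Lp) nvx) => [Axv | [a Axa Aav]].
- by exists [:: v]; rewrite /= Axv.
- by exists [:: a; v]; rewrite /= Axa Aav.
Qed.

End QuasiTransitive.

Unset Implicit Arguments.

Theorem theorem16 (VH : finType) (AH : rel VH) (V : finType) (A : rel V)
    (rho : V -> V -> VH) (k : nat) :
  irreflexive A -> quasi_transitive A -> 4 <= k ->
  exists S : {set V}, kH_kernel AH A rho k S.
Proof.
move=> irrA qtA k_ge4.
have [S [S_indep S_absorb]] := qt_absorbing_set irrA qtA.
exists S; split=> [u v uS vS uv p /andP[Pp _] Lp | x xS].
  case/eqP: uv; apply: S_indep uS vS _.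
  by apply/connectP; exists p; rewrite ?Lp.
have [v vS xv] := S_absorb x.
have [|p [Dp Lp p_gt0 p_le3]] := reach_within_dipath xv; first by apply: contraNneq xS => ->.
exists p; split; rewrite ?Lp //.
apply: leq_trans (hlength_le_size AH rho x p_gt0) (leq_trans p_le3 _).
by case: k k_ge4.
Qed.
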